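(* There exists a universal constant $c>0$ such that the following holds. Let $n\in\mathbb{N}$, $q$ a prime power, $1\le\ell<q$ an integer, and $\rho\in(0,1-\ell/q)$. Let $T_1,\dots,T_n\subseteq\mathbb{F}_q$ each have size $\ell$. If $n\ge\left(\frac{\log q}{\rho(1-\ell/q-\rho)}\right)^{c}$, then the list-recovery ball $B_\rho(T_1\times\cdots\times T_n)$ is $\delta$-mixing for $$\delta=\log_q\left(\frac{(q-\ell)(1-\rho)}{\rho\ell}\right)\cdot\frac{\rho^4(1-\ell/q-\rho)^2}{16\log q}.$$
   Context: $\log$ is base 2. $B_\rho(T_1\times\cdots\times T_n)=\{x\in\mathbb{F}_q^n: |\{i:x_i\notin T_i\}|\le\rho n\}$. A set $T\subseteq\mathbb{F}_q^n$ is $\delta$-mixing if for all nonzero $\alpha,\beta\in\mathbb{F}_q$ and all $z\in\mathbb{F}_q^n$, $\Pr[\alpha X+\beta X'\in T+z]\le q^{-\delta n}$, where $X,X'$ are independent and uniform on $T$. *)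

From mathcomp Require Import all_boot all_algebra.
From Stdlib Require Import Reals.

Set Implicit Arguments.
Unset Strict Implicit.
Unset Printing Implicit Defensive.
Import GRing.Theory.
Local Open Scope ring_scope.

Definition log2 (x : R) : R := Rdiv (ln x) (ln 2).

Definition Rleb' (x y : R) : bool := if Rle_dec x y then true else false.

Definition lr_ball (F : finFieldType) (n : nat) (T : 'I_n -> {set F}) (rho : R)
  : {set 'rV[F]_n} :=
  [set x : 'rV[F]_n |
     Rleb' (INR #|[set i : 'I_n | x ord0 i \notin T i]|) (Rmult rho (INR n))].

(* Pr over X, X' independent uniform on S of [a X + b X' \in S + z],
   computed as a count divided by |S|^2. *)
Definition mix_prob (F : finFieldType) (n : nat) (S : {set 'rV[F]_n})
  (a b : F) (z : 'rV[F]_n) : R :=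
  Rdiv (INR #|[set p : 'rV[F]_n * 'rV[F]_n |
                 [&& p.1 \in S, p.2 \in S & a *: p.1 + b *: p.2 - z \in S]]|)
       (INR (#|S| * #|S|)).

Definition mixing (F : finFieldType) (n : nat) (S : {set 'rV[F]_n}) (delta : R)
  : Prop :=
  forall (a b : F) (z : 'rV[F]_n), a != 0 -> b != 0 ->
    Rle (mix_prob S a b z) (Rpower (INR #|F|) (Ropp (Rmult delta (INR n)))).

Local Open Scope R_scope.

Definition mix_delta (q l : nat) (rho : R) : R :=
  (ln (((INR q - INR l) * (1 - rho)) / (rho * INR l)) / ln (INR q)) *
  ((rho ^ 4 * (1 - INR l / INR q - rho) ^ 2) / (16 * log2 (INR q))).

Definition n_threshold (q l : nat) (rho c : R) : R :=
  Rpower (log2 (INR q) / (rho * (1 - INR l / INR q - rho))) c.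

(* Let K = floor (rho n).  Weight a point x by the product over i of
   wB = (n - K) (q - l) if x_i is in T_i and wA = K l otherwise; normalised,
   this is the product measure under which each coordinate is bad with
   probability K / n.  Every point of the ball weighs at least
   wB ^ (n - K) * wA ^ K, the weight of a point of the level with exactly K bad
   coordinates, and by unimodality of the binomial terms that level carries a
   1 / (n + 1) share of the total mass; so the uniform measure on the ball is
   at most n + 1 times the tilted one.
   Hence Pr [a X + b X' - z \in B] is at most (n + 1) ^ 2 times the probability,
   for two independent tilted points, that a x_i + b x'_i - z_i lands in T_i for
   at least n - K coordinates.  As u |-> a u + b v - z is a bijection, a
   coordinate lands with probability at most p, and choosing h with
   p + 2 h = 1 - K / n, Chernoff's bound gives exp (- n h ^ 2 / (1 + h)) with
   h of order rho (1 - l / q - rho).  For n above the threshold with c = 8 this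
   absorbs both the factor (n + 1) ^ 2 and q ^ (delta n). *)

From mathcomp Require Import all_boot all_algebra.
From Stdlib Require Import Reals.
From Stdlib Require Import Lra ZArith.
From mathcomp Require Import zify.
Import ssrnat ssralg.
Set Implicit Arguments. Unset Strict Implicit. Unset Printing Implicit Defensive.
Import GRing.Theory.

Section BinomialMode.
Variables n K : nat.
Hypothesis K_lt_n : K < n.

Definition binom_term j := 'C(n, j) * ((n - K) ^ (n - j) * K ^ j).

Lemma binom_term_succ j : j < n ->
  binom_term j.+1 * (j.+1 * (n - K)) = binom_term j * ((n - j) * K).
Proof.
move=> j_lt_n; rewrite /binom_term.
have -> : n - j = (n - j.+1).+1 by lia.
rewrite !expnS; set a := (n - K) ^ (n - j.+1); set b := K ^ j.
have -> : (n - j.+1).+1 = n - j by lia.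
transitivity ((j.+1 * 'C(n, j.+1)) * (a * (n - K) * (b * K))); first by lia.
rewrite mul_bin_left; lia.
Qed.

Lemma binom_term_le_succ j : j < K -> binom_term j <= binom_term j.+1.
Proof.
move=> j_lt_K; have pos : 0 < j.+1 * (n - K) by rewrite muln_gt0 subn_gt0.
rewrite -(leq_pmul2r pos) binom_term_succ ?(ltn_trans j_lt_K) // leq_mul2l.
by apply/orP; right; nia.
Qed.

Lemma binom_term_succ_le j : K <= j -> j < n -> binom_term j.+1 <= binom_term j.
Proof.
move=> K_le_j j_lt_n; have pos : 0 < j.+1 * (n - K) by rewrite muln_gt0 subn_gt0.
rewrite -(leq_pmul2r pos) binom_term_succ // leq_mul2l.
by apply/orP; right; nia.
Qed.

Lemma binom_term_le_mode j : j <= n -> binom_term j <= binom_term K.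
Proof.
move=> j_le_n; have [j_le_K | K_lt_j] := leqP j K.
  rewrite -(subKn j_le_K); elim: (K - j) (leq_subr j K) => [|d IHd] d_le_K.
    by rewrite subn0.
  apply: leq_trans (IHd (ltnW d_le_K)).
  by rewrite -(subnSK d_le_K) binom_term_le_succ //; lia.
rewrite -(subnKC (ltnW K_lt_j)).
elim: (j - K) (leq_sub2r K j_le_n) => [|d IHd] Kd_le_nK; first by rewrite addn0.
apply: leq_trans (IHd (ltnW Kd_le_nK)).
by rewrite addnS binom_term_succ_le ?leq_addr //; lia.
Qed.

Lemma expn_le_binom_mode : n ^ n <= n.+1 * binom_term K.
Proof.
rewrite -{1}(subnK (ltnW K_lt_n)) expnDn.
apply: (@leq_trans (\sum_(i < n.+1) binom_term K)).
  by apply: leq_sum => i _; apply: binom_term_le_mode; rewrite -ltnS.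
by rewrite sum_nat_const card_ord.
Qed.
End BinomialMode.

Section RowSums.
Local Open Scope ring_scope.

Lemma sum_row_prod (F : finType) n (f : 'I_n -> F -> nat) :
  (\sum_(x : 'rV[F]_n) \prod_i f i (x ord0 i) = \prod_i \sum_u f i u)%N.
Proof.
rewrite bigA_distr_bigA (reindex (fun g : {ffun 'I_n -> F} => \row_i g i)) /=.
  by apply: eq_bigr => g _; apply: eq_bigr => i _; rewrite mxE.
exists (fun x : 'rV[F]_n => [ffun i => x ord0 i]) => [g _|x _].
  by apply/ffunP => i; rewrite ffunE mxE.
by apply/rowP => i; rewrite mxE ffunE.
Qed.

Lemma sum_row_pair_prod (F : finType) n (f : 'I_n -> F * F -> nat) :
  (\sum_(p : 'rV[F]_n * 'rV[F]_n) \prod_i f i (p.1 ord0 i, p.2 ord0 i) =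
  \prod_i \sum_uv f i uv)%N.
Proof.
rewrite bigA_distr_bigA.
rewrite (reindex (fun g : {ffun 'I_n -> F * F} => (\row_i (g i).1, \row_i (g i).2))) /=.
  by apply: eq_bigr => g _; apply: eq_bigr => i _; rewrite !mxE; case: (g i).
exists (fun p : 'rV[F]_n * 'rV[F]_n => [ffun i => (p.1 ord0 i, p.2 ord0 i)]).
  by move=> g _; apply/ffunP => i; rewrite ffunE !mxE; case: (g i).
by move=> [x y] _; congr (_, _); apply/rowP => i; rewrite mxE ffunE.
Qed.
End RowSums.

Lemma sum_nat_bool (X : finType) (P : pred X) : \sum_x (P x : nat) = #|[set x | P x]|.
Proof. by rewrite -sum1dep_card [RHS]big_mkcond; apply: eq_bigr => x _; case: (P x). Qed.

Lemma prod_nat_bool (I : finType) (P : pred I) : \prod_i (P i : nat) = [forall i, P i].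
Proof.
case: (boolP [forall i, P i]) => [/forallP allP | /forallPn[i /negbTE Pi]].
  by apply: big1 => i _; rewrite allP.
by rewrite (bigD1 i) //= Pi.
Qed.

Lemma sum_nat_eq_pred (X : finType) (P : pred X) (x0 : X) :
  \sum_(x | P x) (x0 == x : nat) = P x0.
Proof.
rewrite big_mkcond (bigD1 x0) //= eqxx big1 ?addn0; first by case: (P x0).
by move=> x /negbTE; rewrite eq_sym => ->; case: (P x).
Qed.

Lemma prod_nat_if (I : finType) (P : pred I) A B :
  \prod_i (if P i then B else A) = B ^ #|[set i | P i]| * A ^ #|[set i | ~~ P i]|.
Proof.
rewrite (bigID P) /= -!prod_nat_const.
congr (_ * _); apply: eq_big => [i|i]; rewrite ?inE //.
  by move->.
by move/negbTE->.
Qed.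

Lemma prod_nat_if_ge (I : finType) (P : pred I) A B k :
  A <= B -> #|[set i | ~~ P i]| <= k -> k <= #|I| ->
  B ^ (#|I| - k) * A ^ k <= \prod_i (if P i then B else A).
Proof.
move=> A_le_B notP_le_k k_le_I; rewrite prod_nat_if.
set g := #|[set i | P i]|; set c := #|[set i | ~~ P i]| in notP_le_k *.
have g_add_c : g + c = #|I|.
  by rewrite /c -[RHS](cardsC [set i | P i]); congr (_ + _); apply: eq_card => i; rewrite !inE.
have -> : g = (#|I| - k) + (k - c) by lia.
rewrite -{2}(subnK notP_le_k) !expnD mulnA leq_mul2r leq_mul2l.
have [-> | e_gt0] := posnP (k - c); last by rewrite leq_exp2r // A_le_B !orbT.
by rewrite !expn0 leqnn !orbT.
Qed.

Section BadCoordinates.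
Variables (F : finType) (n : nat) (T : 'I_n -> {set F}) (l : nat).
Hypothesis card_T : forall i, #|T i| = l.
Local Notation q := #|F|.

Definition bad_coords (x : 'rV[F]_n) := [set i | x ord0 i \notin T i].

Lemma card_bad_coords_eq E :
  #|[set x : 'rV[F]_n | bad_coords x == E]| = (q - l) ^ #|E| * l ^ (n - #|E|).
Proof.
rewrite -sum_nat_bool.
transitivity (\sum_(x : 'rV[F]_n) \prod_i (((x ord0 i \notin T i) == (i \in E)) : nat)).
  apply: eq_bigr => x _; rewrite prod_nat_bool; congr nat_of_bool.
  apply/eqP/forallP => [<- i|eqE]; first by rewrite inE.
  by apply/setP => i; rewrite inE; exact/eqP/eqE.
rewrite (sum_row_prod (fun i u => (((u \notin T i) == (i \in E)) : nat))).
transitivity (\prod_i (if i \in E then q - l else l)).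
  apply: eq_bigr => i _; rewrite sum_nat_bool; case: (i \in E).
    rewrite -[q](cardsC (T i)) card_T addKn; apply: eq_card => u.
    by rewrite !inE eqb_id.
  by rewrite -(card_T i); apply: eq_card => u; rewrite !inE eqbF_neg negbK.
rewrite prod_nat_if; congr (_ ^ _ * _ ^ _); first by apply: eq_card => i; rewrite inE.
have := cardsC E; rewrite card_ord => cardEC.
have -> : n - #|E| = #|~: E| by lia.
by apply: eq_card => i; rewrite !inE.
Qed.

Lemma card_bad_level k :
  #|[set x : 'rV[F]_n | #|bad_coords x| == k]| = 'C(n, k) * ((q - l) ^ k * l ^ (n - k)).
Proof.
rewrite -sum_nat_bool.
transitivity (\sum_(x : 'rV[F]_n) \sum_(E : {set 'I_n} | #|E| == k) (bad_coords x == E : nat)).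
  by apply: eq_bigr => x _; rewrite (sum_nat_eq_pred (fun E : {set 'I_n} => #|E| == k)).
rewrite exchange_big /=.
transitivity (\sum_(E : {set 'I_n} | #|E| == k) ((q - l) ^ k * l ^ (n - k))).
  by apply: eq_bigr => E /eqP cardE; rewrite sum_nat_bool card_bad_coords_eq cardE.
by rewrite sum_nat_cond_const card_draws card_ord.
Qed.
End BadCoordinates.

Section OneCoordinate.
Variables (F : finFieldType) (T : {set F}) (l A B : nat) (a b z : F).
Hypotheses (card_T : #|T| = l) (A_le_B : A <= B).
Hypotheses (a_neq0 : a != 0%R) (b_neq0 : b != 0%R).

Definition weight u := if u \in T then B else A.
Definition lands u v := (a * u + b * v - z)%R \in T.
Definition hits u := \sum_v (v \in T) * lands u v.

Lemma weightE u : weight u = A + (B - A) * (u \in T).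
Proof. by rewrite /weight; case: (u \in T); rewrite ?muln1 ?subnKC ?muln0 ?addn0. Qed.

Lemma sum_mem_T : \sum_v ((v \in T) : nat) = l.
Proof. by rewrite sum_nat_bool -card_T; apply: eq_card => v; rewrite inE. Qed.

Lemma card_lands_l u : #|[set v | lands u v]| = l.
Proof.
rewrite -card_T -(card_preimset T (f := fun v => (a * u + b * v - z)%R)).
  by apply: eq_card => v; rewrite !inE.
by move=> v w /addIr /addrI /(mulfI b_neq0).
Qed.

Lemma card_lands_r v : #|[set u | lands u v]| = l.
Proof.
rewrite -card_T -(card_preimset T (f := fun u => (a * u + b * v - z)%R)).
  by apply: eq_card => u; rewrite !inE.
by move=> u w /addIr /addIr /(mulfI a_neq0).
Qed.

Lemma sum_weight_lands u : \sum_v weight v * lands u v = A * l + (B - A) * hits u.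
Proof.
under eq_bigr do rewrite weightE mulnDl -mulnA.
by rewrite big_split /= -!big_distrr /= sum_nat_bool card_lands_l.
Qed.

Lemma sum_hits : \sum_u hits u = l * l.
Proof.
rewrite /hits exchange_big /=.
under eq_bigr do rewrite -big_distrr /= sum_nat_bool card_lands_r.
by rewrite -big_distrl /= sum_mem_T.
Qed.

Lemma hits_le u : hits u <= l.
Proof.
rewrite -sum_mem_T /hits; apply: leq_sum => v _.
by case: (v \in T); case: (lands u v).
Qed.

(* For fixed u exactly l values v land, and for fixed v exactly l values u do,
   so at most l ^ 2 landing pairs have u in T. *)
Lemma sum_weight_pair_lands_le :
  \sum_u \sum_v weight u * weight v * lands u v <=
  A * l * (\sum_u weight u) + (B - A) * B * l ^ 2.
Proof.
have inner_sum : \sum_u \sum_v weight u * weight v * lands u v =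
    \sum_u (weight u * (A * l) + (B - A) * (weight u * hits u)).
  apply: eq_bigr => u _.
  transitivity (weight u * \sum_v weight v * lands u v).
    by rewrite big_distrr /=; apply: eq_bigr => v _; rewrite mulnA.
  by rewrite sum_weight_lands mulnDr [_ * (_ * hits u)]mulnCA.
have weighted_hits : \sum_u weight u * hits u =
    A * (l * l) + (B - A) * \sum_u ((u \in T) * hits u).
  rewrite -sum_hits !big_distrr -big_split /=.
  by apply: eq_bigr => u _; rewrite weightE mulnDl mulnA.
have hits_T_le : \sum_u ((u \in T) * hits u) <= l * l.
  rewrite -{1}sum_mem_T big_distrl /=; apply: leq_sum => u _.
  by rewrite leq_mul2l hits_le orbT.
rewrite inner_sum big_split /= -big_distrl -big_distrr /= weighted_hits mulnC leq_add2l.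
rewrite -mulnA leq_mul2l -mulnn; apply/orP; right.
apply: (@leq_trans (A * (l * l) + (B - A) * (l * l))).
  by rewrite leq_add2l leq_mul2l hits_T_le orbT.
by rewrite -mulnDl subnKC.
Qed.
End OneCoordinate.

Section WeightedCount.
Variables (F : finFieldType) (n : nat) (T : 'I_n -> {set F}) (l K : nat).
Local Notation q := #|F|.
Hypotheses (card_T : forall i, #|T i| = l) (l_le_q : l <= q).
Hypotheses (K_lt_n : K < n) (Kq_le : K * q <= n * (q - l)).
Variables (S : {set 'rV[F]_n}) (a b : F) (z : 'rV[F]_n) (D E : nat).
Hypotheses (a_neq0 : a != 0%R) (b_neq0 : b != 0%R).
Hypotheses (S_bad_le : forall x, x \in S -> #|bad_coords T x| <= K)
           (level_sub_S : forall x, #|bad_coords T x| == K -> x \in S).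

Definition wA := K * l.
Definition wB := (n - K) * (q - l).
Definition wsum := l * (q - l) * n.
Definition pair_bound := wA * l * wsum + (wB - wA) * wB * l ^ 2.
Definition ball_weight := wB ^ (n - K) * wA ^ K.
Definition coord_weight i := weight (T i) wA wB.
Definition point_weight (x : 'rV[F]_n) := \prod_i coord_weight i (x ord0 i).
Definition pair_weight (p : 'rV[F]_n * 'rV[F]_n) :=
  \prod_i (if lands (T i) a b (z ord0 i) (p.1 ord0 i) (p.2 ord0 i) then D + E else D).
Definition mix_count := #|[set p : 'rV[F]_n * 'rV[F]_n |
  [&& p.1 \in S, p.2 \in S & (a *: p.1 + b *: p.2 - z)%R \in S]]|.

Lemma wA_le_wB : wA <= wB.
Proof. by move: Kq_le l_le_q; rewrite /wA /wB; clear; nia. Qed.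

Lemma sum_coord_weight i : \sum_u coord_weight i u = wsum.
Proof.
under eq_bigr do rewrite /coord_weight (weightE _ wA_le_wB).
rewrite big_split /= sum_nat_const -big_distrr /= (sum_mem_T (card_T i)).
have [Q qE] : exists Q, q = Q + l by exists (q - l); rewrite subnK.
have [m nE] : exists m, n = m + K by exists (n - K); rewrite subnK // ltnW.
have := wA_le_wB; rewrite /wsum /wA /wB qE nE !addnK => AB.
nia.
Qed.

Lemma sum_pair_weight_coord_le i (zi : F) :
  \sum_(uv : F * F) coord_weight i uv.1 * coord_weight i uv.2 *
     (if lands (T i) a b zi uv.1 uv.2 then D + E else D) <= D * wsum ^ 2 + E * pair_bound.
Proof.
set w := coord_weight i; set L := lands (T i) a b zi.
rewrite (eq_bigr (fun uv => D * (w uv.1 * w uv.2) + E * (w uv.1 * w uv.2 * L uv.1 uv.2)));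
  last by move=> uv _; case: (L uv.1 uv.2) => /=; lia.
rewrite big_split /= -!big_distrr /= -(pair_bigA _ (fun u v => w u * w v)) /=.
rewrite -(pair_bigA _ (fun u v => w u * w v * L u v)) /=.
have sum_ww : \sum_u \sum_v w u * w v = wsum ^ 2.
  rewrite -mulnn -{1}(sum_coord_weight i) big_distrl /=.
  by apply: eq_bigr => u _; rewrite -big_distrr /= sum_coord_weight.
rewrite sum_ww leq_add2l leq_mul2l; apply/orP; right.
have := sum_weight_pair_lands_le zi (card_T i) wA_le_wB a_neq0 b_neq0.
by rewrite -/w sum_coord_weight.
Qed.

Lemma ball_weight_le x : #|bad_coords T x| <= K -> ball_weight <= point_weight x.
Proof.
move=> bad_le_K; rewrite /ball_weight /point_weight /coord_weight /weight.
have := @prod_nat_if_ge _ (fun i => x ord0 i \in T i) _ _ _ wA_le_wB bad_le_K.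
by rewrite card_ord; apply; apply: ltnW.
Qed.

Lemma card_level_le : 'C(n, K) * ((q - l) ^ K * l ^ (n - K)) <= #|S|.
Proof.
rewrite -(card_bad_level card_T K); apply: subset_leq_card; apply/subsetP => x.
by rewrite inE => /level_sub_S.
Qed.

Lemma wsum_expn_le : wsum ^ n <= n.+1 * #|S| * ball_weight.
Proof.
apply: (@leq_trans (n.+1 * ('C(n, K) * ((q - l) ^ K * l ^ (n - K))) * ball_weight));
  last by rewrite leq_mul2r leq_mul2l card_level_le !orbT.
have level_weight : 'C(n, K) * ((q - l) ^ K * l ^ (n - K)) * ball_weight =
    binom_term n K K * (l * (q - l)) ^ n.
  rewrite /ball_weight /binom_term /wA /wB !expnMn.
  have powq : (q - l) ^ n = (q - l) ^ K * (q - l) ^ (n - K) by rewrite -expnD subnKC // ltnW.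
  have powl : l ^ n = l ^ (n - K) * l ^ K by rewrite -expnD subnK // ltnW.
  by rewrite powq powl; nia.
rewrite -mulnA level_weight /wsum mulnC expnMn mulnA leq_mul2r.
by rewrite expn_le_binom_mode ?orbT.
Qed.

Lemma pair_weight_ge (p : 'rV[F]_n * 'rV[F]_n) :
  (a *: p.1 + b *: p.2 - z)%R \in S -> (D + E) ^ (n - K) * D ^ K <= pair_weight p.
Proof.
move=> /S_bad_le bad_le_K.
have := @prod_nat_if_ge _ (fun i => lands (T i) a b (z ord0 i) (p.1 ord0 i) (p.2 ord0 i))
  D (D + E) K (leq_addr _ _).
rewrite card_ord /pair_weight; apply; last exact: ltnW.
apply: leq_trans bad_le_K; apply: subset_leq_card; apply/subsetP => i.
by rewrite !inE /lands !mxE.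
Qed.

Lemma mix_count_weighted_le :
  mix_count * (ball_weight * ball_weight * ((D + E) ^ (n - K) * D ^ K)) <=
  (D * wsum ^ 2 + E * pair_bound) ^ n.
Proof.
rewrite /mix_count -sum_nat_bool big_distrl /=.
apply: (@leq_trans (\sum_(p : 'rV[F]_n * 'rV[F]_n)
                     point_weight p.1 * point_weight p.2 * pair_weight p)).
  apply: leq_sum => p _.
  case: and3P => [[p1S p2S combS]|]; last by rewrite mul0n.
  by rewrite mul1n !leq_mul ?ball_weight_le ?S_bad_le ?pair_weight_ge.
under eq_bigr do rewrite /point_weight /pair_weight -!big_split /=.
rewrite (sum_row_pair_prod (fun i uv => coord_weight i uv.1 * coord_weight i uv.2 *
  (if lands (T i) a b (z ord0 i) uv.1 uv.2 then D + E else D))).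
apply: (@leq_trans (\prod_(i < n) (D * wsum ^ 2 + E * pair_bound)));
  last by rewrite prod_nat_const card_ord.
by apply: leq_prod => i _; apply: sum_pair_weight_coord_le.
Qed.

Lemma mix_count_le :
  mix_count * (wsum ^ n * wsum ^ n) * ((D + E) ^ (n - K) * D ^ K) <=
  (n.+1 * #|S|) ^ 2 * (D * wsum ^ 2 + E * pair_bound) ^ n.
Proof.
set P := (D + E) ^ (n - K) * D ^ K; set m := n.+1 * #|S|.
apply: (@leq_trans (mix_count * ((m * ball_weight) * (m * ball_weight)) * P)).
  by rewrite leq_mul2r leq_mul2l !leq_mul ?wsum_expn_le ?orbT.
apply: (@leq_trans (m ^ 2 * (mix_count * (ball_weight * ball_weight * P)))).
  by rewrite eq_leq //; lia.
by rewrite leq_mul2l mix_count_weighted_le orbT.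
Qed.
End WeightedCount.

Section RealBounds.
Local Open Scope R_scope.

Lemma INR_expn (m k : nat) : INR (m ^ k)%N = INR m ^ k.
Proof. by elim: k => [|k IHk] //; rewrite expnS mult_INR IHk. Qed.

Lemma INR_div_ge0 (m k : nat) : 0 <= INR m / INR k.
Proof.
apply: Rmult_le_pos; first exact: pos_INR.
have [-> | k_gt0] := posnP k; first by rewrite Rinv_0; lra.
by apply/Rlt_le/Rinv_0_lt_compat/lt_0_INR/ltP.
Qed.

Lemma exp_le_compat x y : x <= y -> exp x <= exp y.
Proof. by move=> /Rle_lt_or_eq_dec[/exp_increasing|->]; lra. Qed.

Lemma ln_le_compat x y : 0 < x -> x <= y -> ln x <= ln y.
Proof. by move=> x_gt0 /Rle_lt_or_eq_dec[/(ln_increasing _ _ x_gt0)|->]; lra. Qed.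

Lemma ln_le_sub1 x : 0 < x -> ln x <= x - 1.
Proof. by move=> x_gt0; have := exp_ineq1_le (ln x); rewrite exp_ln //; lra. Qed.

Lemma exp_pow x (k : nat) : exp x ^ k = exp (INR k * x).
Proof.
elim: k => [|k IHk]; first by rewrite /= Rmult_0_l exp_0.
by rewrite -tech_pow_Rmult IHk -exp_plus S_INR; congr exp; lra.
Qed.

Lemma exp_div_succ_le h : 0 <= h -> exp (h / (1 + h)) <= 1 + h.
Proof.
move=> h_ge0.
have := exp_ineq1_le (- (h / (1 + h))).
rewrite exp_Ropp (_ : 1 + - (h / (1 + h)) = / (1 + h)); last by field; lra.
move=> /Rinv_le_contravar; rewrite !Rinv_inv; apply.
by apply: Rinv_0_lt_compat; lra.
Qed.

(* Markov's inequality for (1 + h) ^ X with X ~ Bin (n, p), at X >= n - K. *)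
Lemma tilted_ratio_le_exp (n K : nat) (h p : R) :
  0 <= h -> 0 <= p -> (K <= n)%N -> (0 < n)%N ->
  p + 2 * h = 1 - INR K / INR n ->
  (1 + h * p) ^ n / (1 + h) ^ (n - K) <= exp (- (INR n * h ^ 2 / (1 + h))).
Proof.
move=> h_ge0 p_ge0 K_le_n n_gt0 sum_hp.
have n_pos : 0 < INR n by apply: lt_0_INR; apply/ltP.
have num_le : (1 + h * p) ^ n <= exp (INR n * (h * p)).
  rewrite -exp_pow; apply: pow_incr; split; first nra.
  exact: exp_ineq1_le.
have den_ge : exp (INR (n - K) * (h / (1 + h))) <= (1 + h) ^ (n - K).
  rewrite -exp_pow; apply: pow_incr; split; last exact: exp_div_succ_le.
  exact/Rlt_le/exp_pos.
apply: (Rle_trans _ (exp (INR n * (h * p)) / exp (INR (n - K) * (h / (1 + h))))).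
  apply: Rmult_le_compat => //; first by apply: pow_le; nra.
    by apply/Rlt_le/Rinv_0_lt_compat/pow_lt; lra.
  exact: Rinv_le_contravar (exp_pos _) den_ge.
rewrite /Rdiv -exp_Ropp -exp_plus; apply: exp_le_compat.
have K_eq : INR K = INR n * (1 - p - 2 * h).
  by rewrite (_ : 1 - p - 2 * h = INR K / INR n); [field | ]; lra.
rewrite minus_INR; last exact/leP.
have p_le1 : p <= 1 by have := INR_div_ge0 K n; lra.
apply: (Rmult_le_reg_r (1 + h)); first lra.
have -> : (INR n * (h * p) + - ((INR n - INR K) * (h / (1 + h)))) * (1 + h) =
  - (INR n * h ^ 2) - INR n * h ^ 2 * (1 - p) by rewrite K_eq; field; lra.
have -> : - (INR n * h ^ 2 / (1 + h)) * (1 + h) = - (INR n * h ^ 2) by field; lra.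
suff : 0 <= INR n * h ^ 2 * (1 - p) by lra.
by apply: Rmult_le_pos; [apply: Rmult_le_pos; [lra | apply: pow2_ge_0] | lra].
Qed.

Lemma ratio_le_of_weighted_count (N s m V d e g : R) (n K : nat) :
  0 < s -> 0 < V -> 0 < d -> 0 <= e -> 0 <= g -> (K <= n)%N -> (0 < n)%N ->
  g / (V * V) + 2 * (e / d) = 1 - INR K / INR n ->
  N * (V ^ n) ^ 2 * ((d + e) ^ (n - K) * d ^ K) <=
    (m * s) ^ 2 * (d * V ^ 2 + e * g) ^ n ->
  N / (s * s) <= m ^ 2 * exp (- (INR n * (e / d) ^ 2 / (1 + e / d))).
Proof.
move=> s_gt0 V_gt0 d_gt0 e_ge0 g_ge0 K_le_n n_gt0 sum_hp weighted.
set h := e / d; set p := g / (V * V).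
have h_ge0 : 0 <= h by apply: Rmult_le_pos; [lra | apply/Rlt_le/Rinv_0_lt_compat].
have p_ge0 : 0 <= p by apply: Rmult_le_pos; [lra | apply/Rlt_le/Rinv_0_lt_compat; nra].
have d_pow : d ^ n = d ^ (n - K) * d ^ K.
  by rewrite -pow_add; congr (_ ^ _); rewrite -/(addn (n - K) K) subnK.
rewrite (_ : d * V ^ 2 + e * g = d * V ^ 2 * (1 + h * p)) in weighted; last first.
  by rewrite /h /p; field; lra.
rewrite (_ : d + e = d * (1 + h)) in weighted; last by rewrite /h; field; lra.
rewrite !Rpow_mult_distr d_pow pow1 in weighted.
have common_gt0 : 0 < V ^ n * V ^ n * d ^ (n - K) * d ^ K.
  by repeat apply: Rmult_lt_0_compat; apply: pow_lt.
have hK_gt0 : 0 < (1 + h) ^ (n - K) by apply: pow_lt; lra.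
have cancelled : N * (1 + h) ^ (n - K) <= m ^ 2 * (s * s) * (1 + h * p) ^ n.
  apply: (Rmult_le_reg_r _ _ _ common_gt0).
  by lra.
apply: (Rle_trans _ (m ^ 2 * ((1 + h * p) ^ n / (1 + h) ^ (n - K)))).
  apply: (Rmult_le_reg_r (s * s * (1 + h) ^ (n - K))).
    by repeat apply: Rmult_lt_0_compat.
  have -> : N / (s * s) * (s * s * (1 + h) ^ (n - K)) = N * (1 + h) ^ (n - K).
    by field; lra.
  have -> : m ^ 2 * ((1 + h * p) ^ n / (1 + h) ^ (n - K)) * (s * s * (1 + h) ^ (n - K)) =
    m ^ 2 * (s * s) * (1 + h * p) ^ n by field; lra.
  exact: cancelled.
apply: Rmult_le_compat_l; first exact: pow2_ge_0.
exact: tilted_ratio_le_exp h_ge0 p_ge0 K_le_n n_gt0 sum_hp.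
Qed.

Lemma INR_wsum (F : finFieldType) n l :
  (l <= #|F|)%N -> INR (wsum F n l) = INR l * (INR #|F| - INR l) * INR n.
Proof. by move=> l_le_q; rewrite /wsum !mult_INR minus_INR //; apply/leP. Qed.

Lemma INR_pair_bound (F : finFieldType) n l K :
  (l <= #|F|)%N -> (K < n)%N -> (K * #|F| <= n * (#|F| - l))%N ->
  INR (pair_bound F n l K) =
    INR K * INR l * INR l * (INR l * (INR #|F| - INR l) * INR n) +
    ((INR n - INR K) * (INR #|F| - INR l) - INR K * INR l) *
    ((INR n - INR K) * (INR #|F| - INR l)) * INR l ^ 2.
Proof.
move=> l_le_q K_lt_n Kq_le.
rewrite /pair_bound plus_INR !mult_INR (minus_INR _ _ (leP (wA_le_wB l_le_q Kq_le))).
rewrite /wA /wB !mult_INR !minus_INR /=; try ring; apply/leP => //.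
exact: ltnW.
Qed.

Definition tilt (kappa lambda : R) := kappa * (1 - lambda - kappa) / (2 * (1 - lambda)).

Definition chernoff_tail (n : nat) (h : R) :=
  (INR n + 1) ^ 2 * exp (- (INR n * h ^ 2 / (1 + h))).

Lemma mix_prob_le_tilt (F : finFieldType) n (T : 'I_n -> {set F}) l K
    (S : {set 'rV[F]_n}) a b z :
  (forall i, #|T i| = l) -> (0 < l)%N -> (l < #|F|)%N ->
  (K < n)%N -> (K * #|F| <= n * (#|F| - l))%N -> a != 0%R -> b != 0%R ->
  (forall x, x \in S -> (#|bad_coords T x| <= K)%N) ->
  (forall x, #|bad_coords T x| == K -> x \in S) ->
  mix_prob S a b z <= chernoff_tail n (tilt (INR K / INR n) (INR l / INR #|F|)).
Proof.
move=> card_T l_gt0 l_lt_q K_lt_n Kq_le a_neq0 b_neq0 S_bad_le level_sub_S.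
have wsumR := INR_wsum n (ltnW l_lt_q).
have pairR := INR_pair_bound (ltnW l_lt_q) K_lt_n Kq_le.
rewrite /chernoff_tail; set q := #|F| in l_lt_q Kq_le wsumR pairR *.
set h := tilt _ _.
(* Chosen so that E / D = h and p + 2 h = 1 - K / n, with p the tilted
   landing probability bound pair_bound / wsum ^ 2. *)
set D := (2 * n ^ 2 * (q - l))%N; set E := (K * (n * (q - l) - K * q))%N.
have count := mix_count_le card_T (ltnW l_lt_q) K_lt_n Kq_le z D E
  a_neq0 b_neq0 S_bad_le level_sub_S.
have S_gt0 : (0 < #|S|)%N.
  apply: leq_trans (card_level_le card_T level_sub_S).
  by rewrite !muln_gt0 bin_gt0 (ltnW K_lt_n) !expn_gt0 subn_gt0 l_lt_q l_gt0.
have lR : 0 < INR l by apply/lt_0_INR/ltP.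
have lqR : INR l < INR q by apply/lt_INR/ltP.
have nR : 0 < INR n by apply/lt_0_INR/ltP; apply: leq_ltn_trans K_lt_n.
have qlR : INR (q - l) = INR q - INR l by rewrite minus_INR //; apply/leP/ltnW.
have DR : INR D = 2 * INR n ^ 2 * (INR q - INR l).
  by rewrite /D !mult_INR qlR /=; ring.
have ER : INR E = INR K * (INR n * (INR q - INR l) - INR K * INR q).
  by rewrite /E mult_INR minus_INR ?(mult_INR n) ?mult_INR ?qlR //; apply/leP.
have tiltE : INR E / INR D = h.
  by rewrite /h /tilt ER DR; field; repeat split; lra.
have wsum_gt0 : 0 < INR (wsum F n l).
  by rewrite wsumR; apply: Rmult_lt_0_compat; [nra | lra].
have sum_hp : INR (pair_bound F n l K) / (INR (wsum F n l) * INR (wsum F n l)) +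
    2 * (INR E / INR D) = 1 - INR K / INR n.
  by rewrite pairR wsumR DR ER; field; repeat split; lra.
have D_gt0 : 0 < INR D by rewrite DR; apply: Rmult_lt_0_compat; [nra | lra].
rewrite /mix_prob mult_INR -/(mix_count S a b z) -tiltE.
clearbody D E; move: (mix_count S a b z) (wsum F n l) (pair_bound F n l K) count wsum_gt0 sum_hp.
move=> N V g /leP/le_INR count V_gt0 sum_hp.
rewrite !mult_INR !INR_expn !plus_INR !mult_INR S_INR in count.
have sqrE (x : R) : x * x = x ^ 2 by ring.
rewrite !sqrE in count.
apply: ratio_le_of_weighted_count count => //; try exact: pos_INR.
- by apply/lt_0_INR/ltP.
- exact: ltnW.
- exact: leq_ltn_trans K_lt_n.
Qed.

Lemma tilt_bounds kappa lambda rho :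
  0 <= lambda -> 9 / 10 * rho <= kappa <= rho -> rho < 1 - lambda ->
  9 / 20 * (rho * (1 - lambda - rho)) <= tilt kappa lambda <= 1 / 2.
Proof.
move=> lambda_ge0 [kappa_lo kappa_hi] rho_lt; rewrite /tilt.
have den_gt0 : 0 < 2 * (1 - lambda) by lra.
have rho_ge0 : 0 <= rho by lra.
have cancel : kappa * (1 - lambda - kappa) / (2 * (1 - lambda)) * (2 * (1 - lambda)) =
  kappa * (1 - lambda - kappa) by field; lra.
split; apply: (Rmult_le_reg_r _ _ _ den_gt0); rewrite cancel.
- have : 0 <= (kappa - 9 / 10 * rho) * (1 - lambda - kappa) by apply: Rmult_le_pos; lra.
  have : 0 <= rho * (rho - kappa) by apply: Rmult_le_pos; lra.
  have : 0 <= rho * (1 - lambda - rho) * lambda.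
    by apply: Rmult_le_pos => //; apply: Rmult_le_pos; lra.
  nra.
- have : 0 <= kappa * kappa by nra.
  nra.
Qed.

Lemma log2_ge1 x : 2 <= x -> 1 <= log2 x.
Proof.
move=> x_ge2; have ln2_gt0 : 0 < ln 2 by have := ln_lt_2; lra.
rewrite /log2 /Rdiv; apply: (Rmult_le_reg_r (ln 2)) => //.
by rewrite Rmult_assoc Rinv_l ?Rmult_1_r ?Rmult_1_l; [apply: ln_le_compat | lra]; lra.
Qed.

Lemma ln_succ_le x u N :
  4 <= x -> 1 <= x * u -> x ^ 8 <= N -> ln (N + 1) <= N * u ^ 2 / 30.
Proof.
move=> x_ge4 xu_ge1 x8_le_N.
have x8_gt0 : 0 < x ^ 8 by apply: pow_lt; lra.
set t := N / x ^ 8.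
have N_eq : N = x ^ 8 * t by rewrite /t; field; lra.
have t_ge1 : 1 <= t by apply: (Rmult_le_reg_l (x ^ 8)) => //; rewrite -N_eq; lra.
clearbody t.
have x5_ge : 1024 <= x ^ 5.
  have : 4 ^ 5 <= x ^ 5 by apply: pow_incr; lra.
  by rewrite /=; lra.
have ln_N : ln (N + 1) <= ln 2 + 8 * (x - 1) + (t - 1).
  apply: Rle_trans (_ : ln (2 * N) <= _).
    have : 1 ^ 8 <= x ^ 8 by apply: pow_incr; lra.
    by rewrite pow1 => ?; apply: ln_le_compat; lra.
  have x_gt0 : 0 < x by lra.
  rewrite N_eq -Rmult_assoc !ln_mult ?ln_1 //; try nra.
  have := ln_le_sub1 x_gt0; have := @ln_le_sub1 t ltac:(lra).
  lra.
have x6t_le : x ^ 6 * t <= N * u ^ 2.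
  rewrite N_eq (_ : x ^ 8 * t * u ^ 2 = x ^ 6 * t * (x * u) ^ 2); last by ring.
  have : 1 <= (x * u) ^ 2 by have := pow_incr 1 (x * u) 2; rewrite pow1; lra.
  have : 0 <= x ^ 6 * t by apply: Rmult_le_pos; [apply: pow_le |]; lra.
  nra.
have : 1024 * x * t <= x ^ 6 * t.
  rewrite (_ : x ^ 6 * t = x ^ 5 * (x * t)); last by ring.
  have : 0 <= x * t by nra.
  nra.
have : ln 2 <= 1 by have := ln_le_sub1 Rlt_0_2; lra.
nra.
Qed.

Lemma mix_delta_ln_le (q l : nat) rho :
  (1 <= l)%N -> (l < q)%N -> 0 < rho -> rho < 1 - INR l / INR q ->
  mix_delta q l rho * ln (INR q) <= (rho * (1 - INR l / INR q - rho)) ^ 2 / 16.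
Proof.
move=> l_ge1 l_lt_q rho_gt0 rho_lt.
have l_pos : 1 <= INR l by apply: (le_INR 1); apply/leP.
have lq : INR l + 1 <= INR q by rewrite -S_INR; apply/le_INR/leP.
have ln2_gt0 : 0 < ln 2 by have := ln_lt_2; lra.
have ln2_le1 : ln 2 <= 1 by have := ln_le_sub1 Rlt_0_2; lra.
have ln2_le : ln 2 <= ln (INR q) by apply: ln_le_compat; lra.
have l_div_gt0 : 0 < INR l / INR q by apply: Rdiv_lt_0_compat; lra.
set eps := 1 - INR l / INR q - rho.
have eps_gt0 : 0 < eps by rewrite /eps; lra.
set L := ln (((INR q - INR l) * (1 - rho)) / (rho * INR l)).
have deltaE : mix_delta q l rho * ln (INR q) =
    L * ln 2 * (rho ^ 4 * eps ^ 2) / (16 * ln (INR q)).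
  by rewrite /mix_delta /log2 -/eps -/L; field; split; lra.
have L_le : L <= ln (INR q) + ln (/ rho).
  have ratio_le : (INR q - INR l) * (1 - rho) / (rho * INR l) <= INR q * / rho.
    apply: (Rmult_le_reg_r (rho * INR l)); first by nra.
    rewrite (_ : _ / _ * _ = (INR q - INR l) * (1 - rho)); last by field; lra.
    rewrite (_ : _ * _ * _ = INR q * INR l); last by field; lra.
    nra.
  rewrite -ln_mult; [| lra | exact: Rinv_0_lt_compat].
  by apply: ln_le_compat ratio_le; apply: Rdiv_lt_0_compat; nra.
have inv_rho : 0 <= ln (/ rho) <= / rho - 1.
  split; last by apply/ln_le_sub1/Rinv_0_lt_compat.
  rewrite -ln_1; apply: ln_le_compat; first lra.
  by apply: (Rmult_le_reg_l rho) => //; rewrite Rinv_r; lra.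
have L_ln2_le : L * ln 2 <= ln (INR q) / rho.
  have : ln (/ rho) * ln 2 <= ln (/ rho) * ln (INR q) by apply: Rmult_le_compat_l; lra.
  have : ln (INR q) * (1 + ln (/ rho)) <= ln (INR q) * / rho.
    by apply: Rmult_le_compat_l; lra.
  rewrite /Rdiv; nra.
rewrite deltaE.
apply: Rle_trans (_ : ln (INR q) / rho * (rho ^ 4 * eps ^ 2) / (16 * ln (INR q)) <= _).
  apply: Rmult_le_compat_r; first by apply/Rlt_le/Rinv_0_lt_compat; lra.
  by apply: Rmult_le_compat_r => //; apply: Rmult_le_pos; apply: pow_le; lra.
rewrite (_ : _ / _ * _ / _ = rho * (rho * eps) ^ 2 / 16); last by field; split; lra.
have : 0 <= (rho * eps) ^ 2 by apply: pow2_ge_0.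
have : rho <= 1 by lra.
nra.
Qed.

Lemma threshold_bounds (q l n : nat) rho :
  (2 <= q)%N -> 0 < rho -> rho < 1 - INR l / INR q ->
  n_threshold q l rho 8 <= INR n ->
  let u := rho * (1 - INR l / INR q - rho) in
  let x := log2 (INR q) / u in
  [/\ 4 <= x, 1 <= x * u, x ^ 8 <= INR n & 10 <= rho * INR n].
Proof.
move=> q_ge2 rho_gt0 rho_lt n_ge u x.
have qR : 2 <= INR q by apply: (le_INR 2); apply/leP.
have lq_ge0 := INR_div_ge0 l q.
have u_gt0 : 0 < u by apply: Rmult_lt_0_compat; lra.
have u_le : u <= 1 / 4.
  have : rho * (1 - INR l / INR q - rho) <= rho * (1 - rho) by apply: Rmult_le_compat_l; lra.
  have : 0 <= (rho - 1 / 2) ^ 2 by apply: pow2_ge_0.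
  rewrite /u; nra.
have log_ge1 := log2_ge1 qR.
have xu : x * u = log2 (INR q) by rewrite /x; field; lra.
have x_ge4 : 4 <= x by apply: (Rmult_le_reg_r u) => //; lra.
have x8_le : x ^ 8 <= INR n.
  by move: n_ge; rewrite /n_threshold -/u -/x (_ : 8 = INR 8) ?Rpower_pow //=; lra.
split=> //; first lra.
have x7_ge : 4 ^ 7 <= x ^ 7 by apply: pow_incr; lra.
have ux8_le : u * x ^ 8 <= u * INR n by apply: Rmult_le_compat_l; lra.
have un_le : u * INR n <= rho * INR n.
  apply: Rmult_le_compat_r; first exact: pos_INR.
  by rewrite /u; nra.
have ux8E : u * x ^ 8 = x * u * x ^ 7 by ring.
have : 0 <= x ^ 7 by apply: pow_le; lra.
move: x7_ge; rewrite /=; nra.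
Qed.

(* The constants work because 2 / 30 + 1 / 16 <= 2 / 3 * (9 / 20) ^ 2. *)
Lemma chernoff_tail_le_Rpower (n : nat) (u h Q delta : R) :
  0 < Q -> 0 <= u -> 9 / 20 * u <= h <= 1 / 2 ->
  ln (INR n + 1) <= INR n * u ^ 2 / 30 -> delta * ln Q <= u ^ 2 / 16 ->
  chernoff_tail n h <= Rpower Q (- (delta * INR n)).
Proof.
move=> Q_gt0 u_ge0 [h_lo h_hi] ln_le delta_le; rewrite /chernoff_tail.
have N_ge0 := pos_INR n; set N := INR n in N_ge0 ln_le *.
have h_ge0 : 0 <= h by lra.
rewrite /Rpower -{1}(exp_ln (N + 1)); last lra.
rewrite exp_pow -exp_plus; apply: exp_le_compat.
have : 81 / 400 * u ^ 2 <= h ^ 2.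
  by rewrite (_ : 81 / 400 * u ^ 2 = (9 / 20 * u) ^ 2); [apply: pow_incr; lra | field].
have : N * h ^ 2 * (2 / 3) <= N * h ^ 2 / (1 + h).
  apply: Rmult_le_compat_l; first by apply: Rmult_le_pos; [lra | apply: pow2_ge_0].
  apply: (Rmult_le_reg_l (1 + h)); first lra.
  by rewrite Rinv_r; lra.
have : 0 <= N * u ^ 2 by apply: Rmult_le_pos; [lra | apply: pow2_ge_0].
rewrite (_ : INR 2 = 2) //; nra.
Qed.

Lemma nat_floor_exists x : 0 <= x -> exists K : nat, INR K <= x < INR K + 1.
Proof.
move=> x_ge0; have [floor_le floor_gt] := base_Int_part x.
have floor_ge0 : (0 <= Int_part x)%Z.
  suff : (-1 < Int_part x)%Z by lia.
  by apply: lt_IZR; rewrite /=; lra.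
exists (Z.to_nat (Int_part x)); rewrite INR_IZR_INZ Z2Nat.id //; lra.
Qed.

Lemma lr_ball_bad_le (F : finFieldType) n (T : 'I_n -> {set F}) rho K :
  rho * INR n < INR K + 1 -> forall x, x \in lr_ball T rho -> (#|bad_coords T x| <= K)%N.
Proof.
move=> rho_n_lt x; rewrite inE /Rleb'; case: Rle_dec => // bad_le _.
by apply/leP/Nat.lt_succ_r/INR_lt; rewrite S_INR -/(bad_coords T x) in bad_le *; lra.
Qed.

Lemma lr_ball_level (F : finFieldType) n (T : 'I_n -> {set F}) rho K :
  INR K <= rho * INR n -> forall x, #|bad_coords T x| == K -> x \in lr_ball T rho.
Proof.
move=> K_le x /eqP bad_eq.
by rewrite inE /Rleb' -/(bad_coords T x) bad_eq; case: Rle_dec.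
Qed.

Lemma floor_rho_bounds (n l q K : nat) rho :
  (l < q)%N -> 0 < rho -> rho < 1 - INR l / INR q -> 10 <= rho * INR n ->
  INR K <= rho * INR n < INR K + 1 ->
  [/\ (K < n)%N, (K * q <= n * (q - l))%N & 9 / 10 * rho <= INR K / INR n <= rho].
Proof.
move=> l_lt_q rho_gt0 rho_lt rho_n_ge [K_le K_gt].
have qR : INR l < INR q by apply/lt_INR/ltP.
have lR := pos_INR l.
have rho_lt1 : rho < 1 by have := INR_div_ge0 l q; lra.
have n_gt0 : 0 < INR n by nra.
have rho_q : rho * INR q < INR q - INR l.
  rewrite (_ : INR q - INR l = (1 - INR l / INR q) * INR q); last by field; lra.
  by apply: Rmult_lt_compat_r; lra.
split.
- by apply/ltP/INR_lt; nra.
- apply/leP/INR_le; rewrite !mult_INR minus_INR; last by apply/leP/ltnW.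
  nra.
- have cancel : INR K / INR n * INR n = INR K by field; lra.
  by split; apply: (Rmult_le_reg_r (INR n)) => //; rewrite cancel; lra.
Qed.
End RealBounds.

Theorem corollary4p6 :
  exists c : R, Rlt 0 c /\
  forall (F : finFieldType) (n l : nat) (rho : R) (T : 'I_n -> {set F}),
    (1 <= l)%N -> (l < #|F|)%N ->
    Rlt 0 rho -> Rlt rho (Rminus 1 (Rdiv (INR l) (INR #|F|))) ->
    (forall i, #|T i| = l) ->
    Rle (n_threshold #|F| l rho c) (INR n) ->
    mixing (lr_ball T rho) (mix_delta #|F| l rho).
Proof.
exists (IZR 8); split; first by lra.
move=> F n l rho T l_ge1 l_lt_q rho_gt0 rho_lt card_T n_ge a b z a_neq0 b_neq0.
have q_ge2 : (2 <= #|F|)%N by apply: leq_ltn_trans l_lt_q.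
have [x_ge4 xu_ge1 x8_le_n rho_n_ge] := threshold_bounds q_ge2 rho_gt0 rho_lt n_ge.
have [K K_floor] := @nat_floor_exists (Rmult rho (INR n)) ltac:(lra).
have [K_lt_n Kq_le kappa_bounds] :=
  floor_rho_bounds l_lt_q rho_gt0 rho_lt rho_n_ge K_floor.
apply: Rle_trans _ _ _ (mix_prob_le_tilt z card_T l_ge1 l_lt_q K_lt_n Kq_le
  a_neq0 b_neq0 (lr_ball_bad_le K_floor.2) (lr_ball_level K_floor.1)) _.
have q_gt0 : Rlt 0 (INR #|F|) by apply/lt_0_INR/ltP; apply: leq_trans q_ge2.
apply: chernoff_tail_le_Rpower q_gt0 _ _ (ln_succ_le x_ge4 xu_ge1 x8_le_n)
  (mix_delta_ln_le l_ge1 l_lt_q rho_gt0 rho_lt).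
- by apply: Rmult_le_pos; lra.
- exact: tilt_bounds (INR_div_ge0 l #|F|) kappa_bounds rho_lt.
Qed.
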